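(* Fix $N\ge1$, let $\mathbf{F}$ be any one of $\mathbf{F}^{\rm Midpt},\mathbf{F}^{\rm Mass},\mathbf{F}^{\rm Eng}$ (defined in the context), and let $\mathbf{b}(t)$ be the solution of the toy model system with initial condition $\mathbf{b}(0)\in\mathbb{C}^N$. Then there is a constant $C$ depending only on $\|\mathbf{b}(0)\|_2$ such that, for a time step $\Delta t>0$ and $t_n=n\Delta t$, the local truncation error satisfies $$\|\mathbf{b}(t_{n+1})-\mathbf{b}(t_n)-\Delta t\,\mathbf{F}(\mathbf{b}(t_n),\mathbf{b}(t_{n+1}))\|\le C\,\Delta t^3 .$$
   Context: The toy model system is $-i\dot b_j=-|b_j|^2b_j+2b_{j-1}^2\bar b_j+2b_{j+1}^2\bar b_j$, $j=1,\dots,N$, with $b_0(t)=b_{N+1}(t)=0$. $\|\cdot\|=\|\cdot\|_2$ is the Euclidean norm on $\mathbb{C}^N$. For $\mathbf{u},\mathbf{v}\in\mathbb{C}^N$ set $u_0=u_{N+1}=v_0=v_{N+1}=0$, $m_j=\tfrac12(u_j+v_j)$, $a_j=\tfrac12(|u_j|^2+|v_j|^2)$, $q_j=\tfrac12(u_j^2+v_j^2)$, and for $j=1,\dots,N$: $F^{\rm Midpt}_j(\mathbf{u},\mathbf{v})=-i|m_j|^2m_j+2i\,\bar m_j(m_{j-1}^2+m_{j+1}^2)$; $F^{\rm Mass}_j(\mathbf{u},\mathbf{v})=-i\,a_jm_j+2i\,\bar m_j(m_{j+1}^2+m_{j-1}^2)$; $F^{\rm Eng}_j(\mathbf{u},\mathbf{v})=-i\,a_jm_j+2i\,\bar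 m_j(q_{j+1}+q_{j-1})$. The corresponding numerical schemes are $\mathbf{b}_{n+1}=\mathbf{b}_n+\Delta t\,\mathbf{F}(\mathbf{b}_n,\mathbf{b}_{n+1})$. *)

From Stdlib Require Import Reals.
From Coquelicot Require Import Coquelicot.
Open Scope R_scope.

(* Complex vectors of C^N are represented as functions nat -> C, of which only
   indices 1..N are meaningful.  [ext N u] zeroes everything outside 1..N,
   which implements the convention u_0 = u_{N+1} = 0. *)
Definition cvec := nat -> Complex.C.

Definition ext (N : nat) (u : cvec) : cvec :=
  fun j => if andb (Nat.leb 1 j) (Nat.leb j N) then u j else RtoC 0.

Definition cnorm (N : nat) (u : cvec) : R :=
  sqrt (sum_n_m (fun j => Cmod (u j) ^ 2) 1 N).

Inductive scheme := Midpt | Mass | Eng.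

Definition mid (N : nat) (u v : cvec) (j : nat) : Complex.C :=
  ((ext N u j + ext N v j) / 2)%C.
Definition avm (N : nat) (u v : cvec) (j : nat) : Complex.C :=
  RtoC ((Cmod (ext N u j) ^ 2 + Cmod (ext N v j) ^ 2) / 2).
Definition avq (N : nat) (u v : cvec) (j : nat) : Complex.C :=
  ((ext N u j * ext N u j + ext N v j * ext N v j) / 2)%C.

Definition Fsch (s : scheme) (N : nat) (u v : cvec) (j : nat) : Complex.C :=
  let m := mid N u v in
  match s with
  | Midpt =>
      (- Ci * RtoC (Cmod (m j) ^ 2) * m j
       + 2 * Ci * Cconj (m j) * (m (j - 1)%nat * m (j - 1)%nat + m (j + 1)%nat * m (j + 1)%nat))%C
  | Mass =>
      (- Ci * avm N u v j * m j
       + 2 * Ci * Cconj (m j) * (m (j + 1)%nat * m (j + 1)%nat + m (j - 1)%nat * m (j - 1)%nat))%C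
  | Eng =>
      (- Ci * avm N u v j * m j
       + 2 * Ci * Cconj (m j) * (avq N u v (j + 1)%nat + avq N u v (j - 1)%nat))%C
  end.

(* Right-hand side of the toy model written as b_j' = i * (...):
   -i b_j' = -|b_j|^2 b_j + 2 b_{j-1}^2 conj(b_j) + 2 b_{j+1}^2 conj(b_j). *)
Definition toy_rhs (b : cvec) (j : nat) : Complex.C :=
  (Ci * (- RtoC (Cmod (b j) ^ 2) * b j
         + 2 * (b (j - 1)%nat * b (j - 1)%nat) * Cconj (b j)
         + 2 * (b (j + 1)%nat * b (j + 1)%nat) * Cconj (b j)))%C.

Definition toy_solution (N : nat) (b : R -> cvec) : Prop :=
  (forall t, b t 0%nat = RtoC 0) /\ (forall t, b t (S N) = RtoC 0) /\
  (forall t j, (1 <= j <= N)%nat ->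
     is_derive (fun s => b s j) t (toy_rhs (b t) j)).

Definition lte (s : scheme) (N : nat) (b : R -> cvec) (dt : R) (n : nat) : cvec :=
  let t0 := (INR n * dt)%R in
  let t1 := (INR (S n) * dt)%R in
  fun j => (b t1 j - b t0 j - RtoC dt * Fsch s N (b t0) (b t1) j)%C.

(* Along the chain the mass fluxes telescope, so the mass sum |b_k|^2 is conserved and every
   component stays bounded by r = ||b(0)||; hence b and its velocity are Lipschitz in time with
   constants polynomial in r.  Each scheme is the implicit midpoint rule for the cubic field plus
   a correction quadratic in the half-step difference (b(t_{n+1}) - b(t_n))/2 = O(dt).
   For the midpoint rule expand symmetrically about the midpoint t_m:
   E(s) = b(t_m + s) - b(t_m - s) - 2 s f((b(t_m + s) + b(t_m - s))/2) vanishes at s = 0, and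
   E'(s) = O(s^2) because the second difference of a cubic field is quadratic in the
   half-difference while the time-average has derivative O(s).  The mean value inequality on
   [0, dt/2] then gives the dt^3 bound, componentwise and hence in norm. *)

From Stdlib Require Import Reals Lra Lia.
From Coquelicot Require Import Coquelicot.
Open Scope R_scope.

Lemma is_derive_Re (f : R -> C) x l :
  is_derive f x l -> is_derive (fun t => Re (f t)) x (Re l).
Proof.
  intros H. eapply filterdiff_ext_lin.
  - apply (filterdiff_comp' f fst x (fun y : R_AbsRing => scal y l) fst H).
    apply filterdiff_linear, is_linear_fst.
  - reflexivity.
Qed.

Lemma is_derive_Im (f : R -> C) x l :
  is_derive f x l -> is_derive (fun t => Im (f t)) x (Im l).
Proof.
  intros H. eapply filterdiff_ext_lin.
  - apply (filterdiff_comp' f snd x (fun y : R_AbsRing => scal y l) snd H).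
    apply filterdiff_linear, is_linear_snd.
  - reflexivity.
Qed.

Lemma is_derive_C_Re_Im (f : R -> C) x l :
  is_derive (fun t => Re (f t)) x (Re l) -> is_derive (fun t => Im (f t)) x (Im l) ->
  is_derive f x l.
Proof.
  intros Hr Hi.
  assert (Hpair :
    filterdiff (fun z : prod_NormedModule R_AbsRing R_NormedModule R_NormedModule => (fst z, snd z))
      (filtermap (fun t => (Re (f t), Im (f t))) (locally x)) (fun z => (fst z, snd z))).
  { eapply filterdiff_ext. 2: eapply filterdiff_ext_lin. 2: apply filterdiff_id.
    all: intros [a b]; reflexivity. }
  eapply filterdiff_ext. 2: eapply filterdiff_ext_lin.
  2: exact (filterdiff_comp_2 _ _ (fun a b => (a, b)) _ _ (fun a b => (a, b)) Hr Hi Hpair).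
  - intros t. simpl. now destruct (f t).
  - intros y. destruct l; reflexivity.
Qed.

Lemma is_derive_eq {V : NormedModule R_AbsRing} (f : R -> V) x l l' :
  is_derive f x l -> l = l' -> is_derive f x l'.
Proof. now intros H <-. Qed.

Lemma is_derive_C_eq (f : R -> C) x (l l' : C) :
  is_derive f x l -> l = l' -> is_derive f x l'.
Proof. now intros H <-. Qed.

Lemma is_derive_Cconst (z : C) x : is_derive (fun _ : R => z) x (RtoC 0).
Proof. exact (@is_derive_const _ (prod_NormedModule _ R_NormedModule R_NormedModule) z x). Qed.

Lemma is_derive_Cplus (u v : R -> C) x (du dv : C) :
  is_derive u x du -> is_derive v x dv -> is_derive (fun t => u t + v t)%C x (du + dv)%C.
Proof. exact (is_derive_plus u v x du dv). Qed.

Lemma is_derive_Copp (u : R -> C) x (du : C) :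
  is_derive u x du -> is_derive (fun t => - u t)%C x (- du)%C.
Proof. exact (is_derive_opp u x du). Qed.

Lemma is_derive_Cminus (u v : R -> C) x (du dv : C) :
  is_derive u x du -> is_derive v x dv -> is_derive (fun t => u t - v t)%C x (du - dv)%C.
Proof. exact (is_derive_minus u v x du dv). Qed.

Lemma is_derive_Cmult (u v : R -> C) x du dv :
  is_derive u x du -> is_derive v x dv ->
  is_derive (fun t => u t * v t)%C x (du * v x + u x * dv)%C.
Proof.
  intros Hu Hv.
  pose proof (is_derive_Re _ _ _ Hu) as Hur; pose proof (is_derive_Im _ _ _ Hu) as Hui.
  pose proof (is_derive_Re _ _ _ Hv) as Hvr; pose proof (is_derive_Im _ _ _ Hv) as Hvi.
  apply is_derive_C_Re_Im.
  - eapply is_derive_ext; [|eapply is_derive_eq;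
      [apply (is_derive_minus _ _ _ _ _ (is_derive_mult _ _ _ _ _ Hur Hvr (@Rmult_comm))
                                        (is_derive_mult _ _ _ _ _ Hui Hvi (@Rmult_comm)))|]].
    + reflexivity.
    + unfold Re, Im, minus, plus, opp, mult; simpl; ring.
  - eapply is_derive_ext; [|eapply is_derive_eq;
      [apply (is_derive_plus _ _ _ _ _ (is_derive_mult _ _ _ _ _ Hur Hvi (@Rmult_comm))
                                       (is_derive_mult _ _ _ _ _ Hui Hvr (@Rmult_comm)))|]].
    + reflexivity.
    + unfold Re, Im, plus, mult; simpl; ring.
Qed.

Lemma is_derive_Cconj (u : R -> C) x du :
  is_derive u x du -> is_derive (fun t => Cconj (u t)) x (Cconj du).
Proof.
  intros Hu. apply is_derive_C_Re_Im.
  - exact (is_derive_Re _ _ _ Hu).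
  - exact (is_derive_opp _ _ _ (is_derive_Im _ _ _ Hu)).
Qed.

Lemma is_derive_RtoC (r : R -> R) x dr :
  is_derive r x dr -> is_derive (fun t => RtoC (r t)) x (RtoC dr).
Proof.
  intros H. apply is_derive_C_Re_Im; [exact H | apply (is_derive_const 0)].
Qed.

Lemma is_derive_shift (g : R -> C) a x l :
  is_derive g (a + x) l -> is_derive (fun s => g (a + s)) x l.
Proof.
  intros H. eapply is_derive_eq.
  - apply (is_derive_comp g (fun s => a + s)); [exact H|].
    auto_derive; [easy | reflexivity].
  - exact (scal_one l).
Qed.

Lemma is_derive_reflect (g : R -> C) a x l :
  is_derive g (a - x) l -> is_derive (fun s => g (a - s)) x (- l)%C.
Proof.
  intros H. eapply is_derive_eq.
  - apply (is_derive_comp g (fun s => a - s)); [exact H|].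
    auto_derive; [easy | reflexivity].
  - exact (scal_opp_one l).
Qed.

Lemma mean_value_ineq (g g' : R -> R) a b M : a <= b ->
  (forall s, is_derive g s (g' s)) -> (forall s, a <= s <= b -> Rabs (g' s) <= M) ->
  Rabs (g b - g a) <= M * (b - a).
Proof.
  intros Hab Hd Hb.
  destruct (MVT_gen g a b g') as [c [Hc ->]].
  - intros x _. apply Hd.
  - intros x _. apply continuity_pt_filterlim, (ex_derive_continuous g), (ex_intro _ _ (Hd x)).
  - rewrite Rmin_left, Rmax_right in Hc by lra.
    rewrite Rabs_mult, (Rabs_right (b - a)) by lra.
    apply Rmult_le_compat_r; [lra | apply Hb; lra].
Qed.

Lemma mean_value_ineq_C (f f' : R -> C) a b M : a <= b ->
  (forall s, is_derive f s (f' s)) -> (forall s, a <= s <= b -> Cmod (f' s) <= M) ->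
  Cmod (f b - f a) <= 2 * M * (b - a).
Proof.
  intros Hab Hd Hb.
  assert (Hre : Rabs (Re (f b) - Re (f a)) <= M * (b - a)).
  { apply (mean_value_ineq (fun s => Re (f s)) (fun s => Re (f' s))); auto using is_derive_Re.
    intros s Hs. eapply Rle_trans, (Hb s Hs).
    eapply Rle_trans, Rmax_Cmod. apply Rmax_l. }
  assert (Him : Rabs (Im (f b) - Im (f a)) <= M * (b - a)).
  { apply (mean_value_ineq (fun s => Im (f s)) (fun s => Im (f' s))); auto using is_derive_Im.
    intros s Hs. eapply Rle_trans, (Hb s Hs).
    eapply Rle_trans, Rmax_Cmod. apply Rmax_r. }
  (* The factor 2 in the statement absorbs the sqrt 2 of [Cmod_2Rmax]. *)
  assert (Hsqrt2 : sqrt 2 <= 2).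
  { rewrite <- (sqrt_square 2) at 2 by lra. apply sqrt_le_1; lra. }
  eapply Rle_trans; [apply Cmod_2Rmax|].
  rewrite Rmult_assoc. apply Rmult_le_compat; auto using sqrt_pos.
  - apply Rmax_case; apply Rabs_pos.
  - apply Rmax_lub; [exact Hre | exact Him].
Qed.

Open Scope C_scope.

Definition cubic (x y z : C) : C := x * y * Cconj z.

Definition toy_field (p c n : C) : C :=
  Ci * (- cubic c c c + 2 * cubic p p c + 2 * cubic n n c).

Definition toy_field_deriv (p c n p' c' n' : C) : C :=
  Ci * (- (cubic c' c c + cubic c c' c + cubic c c c')
        + 2 * (cubic p' p c + cubic p p' c + cubic p p c')
        + 2 * (cubic n' n c + cubic n n' c + cubic n n c')).

Lemma toy_rhs_field (b : cvec) j :
  toy_rhs b j = toy_field (b (j - 1)%nat) (b j) (b (j + 1)%nat).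
Proof. unfold toy_rhs, toy_field, cubic. rewrite Cmod2_conj. ring. Qed.

Lemma is_derive_cubic (x y z : R -> C) s (x' y' z' : C) :
  is_derive x s x' -> is_derive y s y' -> is_derive z s z' ->
  is_derive (fun t => cubic (x t) (y t) (z t)) s
    (cubic x' (y s) (z s) + cubic (x s) y' (z s) + cubic (x s) (y s) z').
Proof.
  intros Hx Hy Hz. eapply is_derive_C_eq.
  - apply is_derive_Cmult; [apply is_derive_Cmult | apply is_derive_Cconj]; eassumption.
  - unfold cubic. ring.
Qed.

Lemma is_derive_toy_field (p c n : R -> C) s (p' c' n' : C) :
  is_derive p s p' -> is_derive c s c' -> is_derive n s n' ->
  is_derive (fun t => toy_field (p t) (c t) (n t)) s
    (toy_field_deriv (p s) (c s) (n s) p' c' n').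
Proof.
  intros Hp Hc Hn.
  pose proof (is_derive_cubic _ _ _ s _ _ _ Hc Hc Hc) as Hccc.
  pose proof (is_derive_cubic _ _ _ s _ _ _ Hp Hp Hc) as Hppc.
  pose proof (is_derive_cubic _ _ _ s _ _ _ Hn Hn Hc) as Hnnc.
  eapply is_derive_C_eq.
  - apply (is_derive_Cmult (fun _ => Ci)); [apply is_derive_Cconst|].
    apply is_derive_Cplus; [apply is_derive_Cplus|].
    + apply is_derive_Copp, Hccc.
    + apply (is_derive_Cmult (fun _ => 2)); [apply is_derive_Cconst | apply Hppc].
    + apply (is_derive_Cmult (fun _ => 2)); [apply is_derive_Cconst | apply Hnnc].
  - unfold toy_field_deriv. ring.
Qed.

Lemma Cmod_plus_le a b (A B : R) : Cmod a <= A -> Cmod b <= B -> Cmod (a + b) <= A + B.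
Proof. intros; eapply Rle_trans; [apply Cmod_triangle | lra]. Qed.

Lemma Cmod_minus_le a b (A B : R) : Cmod a <= A -> Cmod b <= B -> Cmod (a - b) <= A + B.
Proof. intros; eapply Rle_trans; [apply Cmod_triangle|]. rewrite Cmod_opp; lra. Qed.

Lemma Cmod_opp_le a (A : R) : Cmod a <= A -> Cmod (- a) <= A.
Proof. now rewrite Cmod_opp. Qed.

Lemma Cmod_conj_le a (A : R) : Cmod a <= A -> Cmod (Cconj a) <= A.
Proof. now rewrite Cmod_conj. Qed.

Lemma Cmod_mult_le a b (A B : R) : Cmod a <= A -> Cmod b <= B -> Cmod (a * b) <= A * B.
Proof. intros; rewrite Cmod_mult. apply Rmult_le_compat; auto using Cmod_ge_0. Qed.

Lemma Cmod_Ci_le : Cmod Ci <= 1.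
Proof. rewrite Cmod_Ci; lra. Qed.

Lemma Cmod_2_le : Cmod 2 <= 2.
Proof. rewrite Cmod_R, Rabs_right; lra. Qed.

Lemma Cmod_cubic_le x y z (X Y Z : R) :
  Cmod x <= X -> Cmod y <= Y -> Cmod z <= Z -> Cmod (cubic x y z) <= X * Y * Z.
Proof. intros. apply Cmod_mult_le; [apply Cmod_mult_le | apply Cmod_conj_le]; auto. Qed.

Lemma Cmod_half (z : C) : Cmod (z / 2) = (Cmod z / 2)%R.
Proof. rewrite Cmod_div, Cmod_R, Rabs_right; [reflexivity | lra | injection; lra]. Qed.

Ltac bound_Cmod :=
  first [ eassumption | apply Cmod_Ci_le | apply Cmod_2_le
  | eapply Cmod_cubic_le; [bound_Cmod | bound_Cmod | bound_Cmod]
  | eapply Cmod_plus_le; [bound_Cmod | bound_Cmod]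
  | eapply Cmod_minus_le; [bound_Cmod | bound_Cmod]
  | eapply Cmod_mult_le; [bound_Cmod | bound_Cmod]
  | eapply Cmod_conj_le; bound_Cmod | eapply Cmod_opp_le; bound_Cmod ].

Lemma Cmod_toy_field_le p c n (r : R) :
  Cmod p <= r -> Cmod c <= r -> Cmod n <= r -> Cmod (toy_field p c n) <= 5 * r ^ 3.
Proof. intros. unfold toy_field. eapply Rle_trans; [bound_Cmod | right; ring]. Qed.

Lemma toy_field_lipschitz x1 x2 x3 y1 y2 y3 (r D : R) :
  Cmod x1 <= r -> Cmod x2 <= r -> Cmod x3 <= r ->
  Cmod y1 <= r -> Cmod y2 <= r -> Cmod y3 <= r ->
  Cmod (x1 - y1) <= D -> Cmod (x2 - y2) <= D -> Cmod (x3 - y3) <= D ->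
  Cmod (toy_field x1 x2 x3 - toy_field y1 y2 y3) <= 15 * r ^ 2 * D.
Proof.
  intros.
  replace (toy_field x1 x2 x3 - toy_field y1 y2 y3) with
    (Ci * (- (cubic (x2 - y2) x2 x2 + cubic y2 (x2 - y2) x2 + cubic y2 y2 (x2 - y2))
          + 2 * (cubic (x1 - y1) x1 x2 + cubic y1 (x1 - y1) x2 + cubic y1 y1 (x2 - y2))
          + 2 * (cubic (x3 - y3) x3 x2 + cubic y3 (x3 - y3) x2 + cubic y3 y3 (x2 - y2))))
    by (unfold toy_field, cubic; rewrite !Cminus_conj; ring).
  eapply Rle_trans; [bound_Cmod | right; ring].
Qed.

Lemma Cmod_toy_field_deriv_le p c n p' c' n' (r mu : R) :
  Cmod p <= r -> Cmod c <= r -> Cmod n <= r ->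
  Cmod p' <= mu -> Cmod c' <= mu -> Cmod n' <= mu ->
  Cmod (toy_field_deriv p c n p' c' n') <= 15 * r ^ 2 * mu.
Proof. intros. unfold toy_field_deriv. eapply Rle_trans; [bound_Cmod | right; ring]. Qed.

Lemma toy_field_second_difference up uc un vp vc vn (r del : R) :
  Cmod ((up + vp) / 2) <= r -> Cmod ((uc + vc) / 2) <= r -> Cmod ((un + vn) / 2) <= r ->
  Cmod ((up - vp) / 2) <= del -> Cmod ((uc - vc) / 2) <= del -> Cmod ((un - vn) / 2) <= del ->
  Cmod (toy_field up uc un + toy_field vp vc vn
        - 2 * toy_field ((up + vp) / 2) ((uc + vc) / 2) ((un + vn) / 2)) <= 30 * r * del ^ 2.
Proof.
  set (mp := (up + vp) / 2); set (mc := (uc + vc) / 2); set (mn := (un + vn) / 2).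
  set (dp := (up - vp) / 2); set (dc := (uc - vc) / 2); set (dn := (un - vn) / 2).
  intros.
  set (S := fun x y z dx dy dz : C =>
              2 * (dx * dy * Cconj z + dx * y * Cconj dz + x * dy * Cconj dz)).
  replace (toy_field up uc un + toy_field vp vc vn - 2 * toy_field mp mc mn) with
    (Ci * (- S mc mc mc dc dc dc + 2 * S mp mp mc dp dp dc + 2 * S mn mn mc dn dn dc)).
  - unfold S. eapply Rle_trans; [bound_Cmod | right; ring].
  - replace up with (mp + dp) by (unfold mp, dp; field).
    replace uc with (mc + dc) by (unfold mc, dc; field).
    replace un with (mn + dn) by (unfold mn, dn; field).
    replace vp with (mp - dp) by (unfold mp, dp; field).
    replace vc with (mc - dc) by (unfold mc, dc; field).
    replace vn with (mn - dn) by (unfold mn, dn; field).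
    unfold S, toy_field, cubic. rewrite !Cminus_conj, !Cplus_conj. ring.
Qed.

Close Scope C_scope.

Lemma zero_derive_const (g : R -> R) : (forall s, is_derive g s 0) -> forall t u, g t = g u.
Proof.
  intros Hd.
  assert (Hle : forall t u, t <= u -> g u = g t).
  { intros t u Htu.
    pose proof (mean_value_ineq g (fun _ => 0) t u 0 Htu Hd) as H.
    assert (Rabs (g u - g t) <= 0)
      by (rewrite <- (Rmult_0_l (u - t)); apply H; intros; rewrite Rabs_R0; lra).
    pose proof (Rabs_pos (g u - g t)). apply Rminus_diag_uniq, Rabs_eq_0. lra. }
  intros t u. destruct (Rle_dec t u); [symmetry|]; apply Hle; lra.
Qed.

Lemma sum_n_m_telescope (h : nat -> R) n :
  sum_n_m (fun k => h k - h (k - 1)%nat) 1 n = h n - h 0%nat.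
Proof.
  induction n.
  - rewrite sum_n_m_zero by lia. simpl. unfold zero; simpl; lra.
  - rewrite sum_n_Sm, IHn by lia. simpl. rewrite Nat.sub_0_r. unfold plus; simpl. ring.
Qed.

Lemma is_derive_sum_n_m (g g' : nat -> R -> R) t n :
  (forall k, (1 <= k <= n)%nat -> is_derive (g k) t (g' k t)) ->
  is_derive (fun s => sum_n_m (fun k => g k s) 1 n) t (sum_n_m (fun k => g' k t) 1 n).
Proof.
  induction n; intros Hd.
  - rewrite sum_n_m_zero by lia.
    apply (is_derive_ext (fun _ => 0)); [intros; rewrite sum_n_m_zero by lia; reflexivity|].
    apply (is_derive_const (V := R_NormedModule)).
  - rewrite sum_n_Sm by lia.
    apply (is_derive_ext (fun s => sum_n_m (fun k => g k s) 1 n + g (S n) s));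
      [intros; rewrite sum_n_Sm by lia; reflexivity|].
    apply (is_derive_plus (V := R_NormedModule)); [apply IHn; intros k Hk|]; apply Hd; lia.
Qed.

Lemma sum_n_m_term_le (f : nat -> R) n k :
  (forall i, 0 <= f i) -> (1 <= k <= n)%nat -> f k <= sum_n_m f 1 n.
Proof.
  intros Hf Hk. rewrite (sum_n_m_Chasles f 1 (k - 1) n), (sum_Sn_m f (S (k - 1))) by lia.
  replace (S (k - 1)) with k by lia.
  assert (Hnn : forall a b, 0 <= sum_n_m f a b).
  { intros a b. rewrite <- (Rmult_0_r (INR (S b - a))), <- sum_n_m_const. apply sum_n_m_le, Hf. }
  pose proof (Hnn 1%nat (k - 1)%nat). pose proof (Hnn (S k) n).
  unfold plus; simpl. lra.
Qed.

Lemma sum_n_m_le_const (f : nat -> R) n X :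
  (forall k, (1 <= k <= n)%nat -> f k <= X) -> sum_n_m f 1 n <= INR n * X.
Proof.
  induction n; intros Hk.
  - rewrite sum_n_m_zero by lia. unfold zero; simpl; lra.
  - rewrite sum_n_Sm, S_INR by lia. unfold plus; simpl.
    assert (sum_n_m f 1 n <= INR n * X) by (apply IHn; intros; apply Hk; lia).
    assert (f (S n) <= X) by (apply Hk; lia). lra.
Qed.

Definition mass (N : nat) (u : cvec) : R := sum_n_m (fun k => Cmod (u k) ^ 2) 1 N.

Definition mass_flux (x y : C) : R := Im (x * x * Cconj y * Cconj y)%C.

Lemma toy_field_mass_balance (p c n : C) :
  2 * (Re c * Re (toy_field p c n) + Im c * Im (toy_field p c n))
  = 4 * (mass_flux c n - mass_flux p c).
Proof.
  destruct p as [p1 p2], c as [c1 c2], n as [n1 n2].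
  unfold toy_field, cubic, mass_flux, Re, Im, Cconj, Cmult, Cplus, Copp, Ci; simpl. ring.
Qed.

Lemma is_derive_Cmod2 (u : R -> C) t (du : C) : is_derive u t du ->
  is_derive (fun s => Cmod (u s) ^ 2) t (2 * (Re (u t) * Re du + Im (u t) * Im du)).
Proof.
  intros H.
  apply (is_derive_ext (fun s => Re (u s) * Re (u s) + Im (u s) * Im (u s)));
    [intros s; rewrite Cmod2_alt; simpl; ring|].
  pose proof (is_derive_Re _ _ _ H) as Hr. pose proof (is_derive_Im _ _ _ H) as Hi.
  eapply is_derive_eq.
  - exact (is_derive_plus _ _ _ _ _ (is_derive_mult _ _ _ _ _ Hr Hr (@Rmult_comm))
                                    (is_derive_mult _ _ _ _ _ Hi Hi (@Rmult_comm))).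
  - unfold plus, mult; simpl. ring.
Qed.

(* At the boundary indices b_k = 0 makes this vanish, so it is the derivative of b_k for every
   0 <= k <= N + 1. *)
Definition toy_velocity (b : R -> cvec) (t : R) (k : nat) : C :=
  toy_field (b t (k - 1)%nat) (b t k) (b t (k + 1)%nat).

Lemma toy_field_center_zero p n : toy_field p 0%C n = 0%C.
Proof.
  destruct p, n. unfold toy_field, cubic, Cconj, Cmult, Cplus, Copp, Ci.
  apply injective_projections; simpl; ring.
Qed.

Lemma interior_or_boundary N k : (k <= S N)%nat -> (1 <= k <= N)%nat \/ (k = 0 \/ k = S N)%nat.
Proof. lia. Qed.

Definition time_average (b : R -> cvec) (t t' : R) (k : nat) : C := ((b t k + b t' k) / 2)%C.

Definition midpoint_field (b : R -> cvec) (t t' : R) (j : nat) : C :=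
  toy_field (time_average b t t' (j - 1)) (time_average b t t' j) (time_average b t t' (j + 1)).

Definition velocity_half_diff (b : R -> cvec) (tm s : R) (k : nat) : C :=
  ((toy_velocity b (tm + s) k - toy_velocity b (tm - s) k) / 2)%C.

Definition midpoint_field_deriv (b : R -> cvec) (tm s : R) (j : nat) : C :=
  let a := time_average b (tm - s) (tm + s) in
  let w := velocity_half_diff b tm s in
  toy_field_deriv (a (j - 1)%nat) (a j) (a (j + 1)%nat) (w (j - 1)%nat) (w j) (w (j + 1)%nat).

Definition half_diff (N : nat) (u v : cvec) (k : nat) : C := ((ext N u k - ext N v k) / 2)%C.

(* With m = (u + v)/2 and d = (u - v)/2 one has (|u|^2 + |v|^2)/2 = |m|^2 + |d|^2 and
   (u^2 + v^2)/2 = m^2 + d^2, so every scheme is the midpoint rule plus this term. *)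
Definition scheme_correction (s : scheme) (N : nat) (u v : cvec) (j : nat) : C :=
  let m := mid N u v in
  let d := half_diff N u v in
  match s with
  | Midpt => 0
  | Mass => - Ci * (d j * Cconj (d j)) * m j
  | Eng => - Ci * (d j * Cconj (d j)) * m j
           + 2 * Ci * Cconj (m j) * (d (j + 1)%nat * d (j + 1)%nat + d (j - 1)%nat * d (j - 1)%nat)
  end.

Lemma Fsch_toy_field s N u v j :
  Fsch s N u v j = (toy_field (mid N u v (j - 1)) (mid N u v j) (mid N u v (j + 1))
                    + scheme_correction s N u v j)%C.
Proof.
  assert (Havm : avm N u v j = (mid N u v j * Cconj (mid N u v j)
                                + half_diff N u v j * Cconj (half_diff N u v j))%C).
  { unfold avm, mid, half_diff. rewrite RtoC_div by lra. rewrite RtoC_plus, !Cmod2_conj.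
    rewrite !Cdiv_conj, Cplus_conj, Cminus_conj by (injection; lra).
    assert (Hc2 : Cconj 2 = 2) by (apply injective_projections; simpl; ring).
    rewrite Hc2. field. }
  assert (Havq : forall k, avq N u v k
                           = (mid N u v k * mid N u v k + half_diff N u v k * half_diff N u v k)%C).
  { intros k. unfold avq, mid, half_diff. field. }
  destruct s; unfold Fsch, scheme_correction; cbv zeta; rewrite ?Havm, ?Havq;
    unfold toy_field, cubic; rewrite ?Cmod2_conj; ring.
Qed.

Lemma Cmod_scheme_correction_le s N u v j (r del : R) :
  Cmod (mid N u v j) <= r -> Cmod (half_diff N u v (j - 1)) <= del ->
  Cmod (half_diff N u v j) <= del -> Cmod (half_diff N u v (j + 1)) <= del ->
  Cmod (scheme_correction s N u v j) <= 5 * r * del ^ 2.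
Proof.
  intros Hm Hp Hc Hn.
  assert (0 <= r) by (eapply Rle_trans; [apply Cmod_ge_0 | exact Hm]).
  destruct s; unfold scheme_correction; cbv zeta.
  - rewrite Cmod_0. apply Rmult_le_pos; [lra | apply pow2_ge_0].
  - eapply Rle_trans; [bound_Cmod|]. nra.
  - eapply Rle_trans; [bound_Cmod | right; ring].
Qed.

Lemma cnorm_le_sqrt_dim N (u : cvec) (X : R) : 0 <= X ->
  (forall j, (1 <= j <= N)%nat -> Cmod (u j) <= X) -> cnorm N u <= sqrt (INR N) * X.
Proof.
  intros HX Hu. unfold cnorm.
  rewrite <- (sqrt_pow2 X HX), <- sqrt_mult_alt by apply pos_INR.
  apply sqrt_le_1_alt, sum_n_m_le_const. intros j Hj.
  apply pow_incr. split; [apply Cmod_ge_0 | now apply Hu].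
Qed.

Section ToySolution.

Variables (N : nat) (b : R -> cvec).
Hypothesis Hb : toy_solution N b.

Lemma toy_mass_conserved t : mass N (b t) = mass N (b 0).
Proof.
  destruct Hb as [H0 [HN1 Hd]]. apply (zero_derive_const (fun s => mass N (b s))). intros s.
  eapply is_derive_eq; [apply (is_derive_sum_n_m (fun k s => Cmod (b s k) ^ 2)
    (fun k s => 4 * (mass_flux (b s k) (b s (k + 1)%nat) - mass_flux (b s (k - 1)%nat) (b s k))))|].
  - intros k Hk. rewrite <- toy_field_mass_balance. apply is_derive_Cmod2.
    rewrite <- toy_rhs_field. apply Hd; lia.
  - rewrite (sum_n_m_ext_loc _ (fun k => 4 * mass_flux (b s k) (b s (k + 1)%nat)
                                   - 4 * mass_flux (b s (k - 1)%nat) (b s (k - 1 + 1)%nat))).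
    + rewrite (sum_n_m_telescope (fun k => 4 * mass_flux (b s k) (b s (k + 1)%nat))).
      rewrite Nat.add_1_r, HN1, H0. unfold mass_flux, Im, Cconj, Cmult; simpl. ring.
    + intros k Hk. replace (k - 1 + 1)%nat with k by lia. apply Rmult_minus_distr_l.
Qed.

Lemma toy_solution_boundary t k : (k = 0 \/ k = S N)%nat -> b t k = 0%C.
Proof. destruct Hb as [H0 [HN1 _]]. now intros [-> | ->]. Qed.

Lemma toy_velocity_boundary t k : (k = 0 \/ k = S N)%nat -> toy_velocity b t k = 0%C.
Proof.
  intros Hk. unfold toy_velocity. rewrite (toy_solution_boundary t k Hk).
  apply toy_field_center_zero.
Qed.

Lemma toy_solution_derive t k : (k <= S N)%nat ->
  is_derive (fun s => b s k) t (toy_velocity b t k).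
Proof.
  intros Hk. destruct (interior_or_boundary N k Hk) as [Hin | Hbd].
  - unfold toy_velocity. rewrite <- toy_rhs_field. now apply Hb.
  - rewrite toy_velocity_boundary by exact Hbd.
    eapply is_derive_ext; [|apply is_derive_Cconst].
    intros s. symmetry. now apply toy_solution_boundary.
Qed.

Lemma ext_toy_solution t k : (k <= S N)%nat -> ext N (b t) k = b t k.
Proof.
  intros Hk. unfold ext.
  destruct (Nat.leb_spec 1 k), (Nat.leb_spec k N); simpl; try reflexivity;
    symmetry; apply toy_solution_boundary; lia.
Qed.

Let r := cnorm N (b 0).

Lemma cnorm_nonneg : 0 <= r.
Proof. apply sqrt_pos. Qed.

Lemma Cmod_toy_solution_le t k : (k <= S N)%nat -> Cmod (b t k) <= r.
Proof.
  intros Hk. destruct (interior_or_boundary N k Hk) as [Hin | Hbd].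
  - unfold r, cnorm. fold (mass N (b 0)). rewrite <- (toy_mass_conserved t).
    rewrite <- (sqrt_pow2 (Cmod (b t k))) by apply Cmod_ge_0.
    apply sqrt_le_1_alt, (sum_n_m_term_le (fun k => Cmod (b t k) ^ 2)); [|exact Hin].
    intros; apply pow2_ge_0.
  - rewrite toy_solution_boundary, Cmod_0 by exact Hbd. apply cnorm_nonneg.
Qed.

Lemma Cmod_toy_velocity_le t k : (k <= S N)%nat -> Cmod (toy_velocity b t k) <= 5 * r ^ 3.
Proof.
  intros Hk. destruct (interior_or_boundary N k Hk) as [Hin | Hbd].
  - apply Cmod_toy_field_le; apply Cmod_toy_solution_le; lia.
  - rewrite toy_velocity_boundary, Cmod_0 by exact Hbd.
    pose proof cnorm_nonneg. apply Rmult_le_pos; [lra | now apply pow_le].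
Qed.

Lemma toy_solution_lipschitz t t' k : (k <= S N)%nat ->
  Cmod (b t' k - b t k) <= 10 * r ^ 3 * Rabs (t' - t).
Proof.
  intros Hk.
  assert (Hmvi : forall u u', u <= u' -> Cmod (b u' k - b u k) <= 10 * r ^ 3 * (u' - u)).
  { intros u u' Hu. replace (10 * r ^ 3) with (2 * (5 * r ^ 3)) by ring.
    apply (mean_value_ineq_C (fun s => b s k) (fun s => toy_velocity b s k)); auto.
    - intros s. now apply toy_solution_derive.
    - intros s _. now apply Cmod_toy_velocity_le. }
  destruct (Rle_dec t t').
  - rewrite Rabs_right by lra. now apply Hmvi.
  - rewrite Rabs_left, Ropp_minus_distr by lra.
    replace (b t' k - b t k)%C with (- (b t k - b t' k))%C by ring. rewrite Cmod_opp.
    apply Hmvi; lra.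
Qed.

Lemma toy_velocity_lipschitz t t' k : (k <= S N)%nat ->
  Cmod (toy_velocity b t' k - toy_velocity b t k) <= 150 * r ^ 5 * Rabs (t' - t).
Proof.
  intros Hk. destruct (interior_or_boundary N k Hk) as [Hin | Hbd].
  - replace (150 * r ^ 5 * Rabs (t' - t)) with (15 * r ^ 2 * (10 * r ^ 3 * Rabs (t' - t))) by ring.
    apply toy_field_lipschitz;
      first [apply Cmod_toy_solution_le | apply toy_solution_lipschitz]; lia.
  - rewrite !toy_velocity_boundary by exact Hbd.
    rewrite (proj1 (Ceq_minus _ _) eq_refl), Cmod_0.
    pose proof cnorm_nonneg. pose proof (Rabs_pos (t' - t)).
    apply Rmult_le_pos; [apply Rmult_le_pos; [lra | now apply pow_le] | lra].
Qed.

Lemma is_derive_time_average tm s k : (k <= S N)%nat ->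
  is_derive (fun s => time_average b (tm - s) (tm + s) k) s
    (velocity_half_diff b tm s k).
Proof.
  intros Hk. unfold time_average, velocity_half_diff. eapply is_derive_C_eq.
  - apply (is_derive_Cmult _ (fun _ => / 2)%C); [|apply is_derive_Cconst].
    apply is_derive_Cplus.
    + apply (is_derive_reflect (fun t => b t k)). now apply toy_solution_derive.
    + apply (is_derive_shift (fun t => b t k)). now apply toy_solution_derive.
  - field.
Qed.

Lemma Cmod_time_average_le t t' k : (k <= S N)%nat -> Cmod (time_average b t t' k) <= r.
Proof.
  intros Hk. unfold time_average. rewrite Cmod_half.
  pose proof (Cmod_triangle (b t k) (b t' k)).
  pose proof (Cmod_toy_solution_le t k Hk). pose proof (Cmod_toy_solution_le t' k Hk).
  lra.
Qed.

Lemma is_derive_midpoint_field tm s j : (1 <= j <= N)%nat ->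
  is_derive (fun s => midpoint_field b (tm - s) (tm + s) j) s (midpoint_field_deriv b tm s j).
Proof. intros Hj. apply is_derive_toy_field; apply is_derive_time_average; lia. Qed.

Lemma Cmod_velocity_half_diff_le tm s k : 0 <= s -> (k <= S N)%nat ->
  Cmod (velocity_half_diff b tm s k) <= 150 * r ^ 5 * s.
Proof.
  intros Hs Hk. unfold velocity_half_diff. rewrite Cmod_half.
  pose proof (toy_velocity_lipschitz (tm - s) (tm + s) k Hk) as H.
  rewrite Rabs_right in H by lra.
  replace (tm + s - (tm - s)) with (2 * s) in H by ring. lra.
Qed.

Lemma Cmod_solution_half_diff_le tm s k : 0 <= s -> (k <= S N)%nat ->
  Cmod ((b (tm - s) k - b (tm + s) k) / 2) <= 10 * r ^ 3 * s.
Proof.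
  intros Hs Hk. rewrite Cmod_half.
  pose proof (toy_solution_lipschitz (tm + s) (tm - s) k Hk) as H.
  rewrite Rabs_left1 in H by lra.
  replace (- (tm - s - (tm + s))) with (2 * s) in H by ring. lra.
Qed.

Lemma midpoint_defect_derive_le tm s j : 0 <= s -> (1 <= j <= N)%nat ->
  Cmod (toy_velocity b (tm - s) j + toy_velocity b (tm + s) j
        - 2 * midpoint_field b (tm - s) (tm + s) j
        - RtoC (2 * s) * midpoint_field_deriv b tm s j) <= 7500 * r ^ 7 * s ^ 2.
Proof.
  intros Hs Hj.
  assert (Hsecond : Cmod (toy_velocity b (tm - s) j + toy_velocity b (tm + s) j
                          - 2 * midpoint_field b (tm - s) (tm + s) j)
                    <= 30 * r * (10 * r ^ 3 * s) ^ 2).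
  { apply toy_field_second_difference;
      first [apply Cmod_time_average_le | apply Cmod_solution_half_diff_le]; (lia || lra). }
  assert (Hderiv : Cmod (midpoint_field_deriv b tm s j) <= 15 * r ^ 2 * (150 * r ^ 5 * s)).
  { apply Cmod_toy_field_deriv_le;
      first [apply Cmod_time_average_le | apply Cmod_velocity_half_diff_le]; (lia || lra). }
  assert (H2s : Cmod (RtoC (2 * s)) <= 2 * s) by (rewrite Cmod_R, Rabs_right; lra).
  eapply Rle_trans; [exact (Cmod_minus_le _ _ _ _ Hsecond (Cmod_mult_le _ _ _ _ H2s Hderiv))|].
  right. ring.
Qed.

Lemma midpoint_rule_defect t t' j : t <= t' -> (1 <= j <= N)%nat ->
  Cmod (b t' j - b t j - RtoC (t' - t) * midpoint_field b t t' j) <= 1875 * r ^ 7 * (t' - t) ^ 3.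
Proof.
  intros Htt' Hj.
  set (tm := (t + t') / 2).
  set (E := fun s => (b (tm + s) j - b (tm - s) j
                      - RtoC (2 * s) * midpoint_field b (tm - s) (tm + s) j)%C).
  assert (HE : forall s, is_derive E s
    (toy_velocity b (tm - s) j + toy_velocity b (tm + s) j
     - 2 * midpoint_field b (tm - s) (tm + s) j
     - RtoC (2 * s) * midpoint_field_deriv b tm s j)%C).
  { intros s. eapply is_derive_C_eq.
    - apply is_derive_Cminus; [apply is_derive_Cminus|].
      + apply (is_derive_shift (fun u => b u j)), toy_solution_derive; lia.
      + apply (is_derive_reflect (fun u => b u j)), toy_solution_derive; lia.
      + apply is_derive_Cmult; [|now apply is_derive_midpoint_field].
        apply (is_derive_RtoC (fun s => 2 * s) s 2). auto_derive; [easy | ring].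
    - cbv beta. ring. }
  assert (Hends : (E ((t' - t) / 2)%R - E 0%R)%C
                  = (b t' j - b t j - RtoC (t' - t) * midpoint_field b t t' j)%C).
  { unfold E. replace (tm + (t' - t) / 2) with t' by (unfold tm; field).
    replace (tm - (t' - t) / 2) with t by (unfold tm; field).
    replace (2 * ((t' - t) / 2)) with (t' - t) by field.
    rewrite Rplus_0_r, Rminus_0_r, Rmult_0_r. ring. }
  assert (Hr7 : 0 <= r ^ 7) by (apply pow_le, cnorm_nonneg).
  rewrite <- Hends.
  eapply Rle_trans.
  - apply (mean_value_ineq_C E _ 0 ((t' - t) / 2) (7500 * r ^ 7 * ((t' - t) / 2) ^ 2)
             ltac:(lra) HE).
    intros s Hs. eapply Rle_trans; [apply midpoint_defect_derive_le; [lra | exact Hj]|].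
    apply Rmult_le_compat_l; [lra | apply pow_incr; lra].
  - right. field.
Qed.

Lemma Cmod_lte_le s dt n j : 0 < dt -> (1 <= j <= N)%nat ->
  Cmod (lte s N b dt n j) <= 2000 * r ^ 7 * dt ^ 3.
Proof.
  intros Hdt Hj.
  set (t0 := INR n * dt); set (t1 := INR (S n) * dt).
  assert (Hstep : t1 - t0 = dt) by (unfold t1, t0; rewrite S_INR; ring).
  assert (Hmid : forall k, (k <= S N)%nat -> mid N (b t0) (b t1) k = time_average b t0 t1 k).
  { intros k Hk. unfold mid, time_average. now rewrite !ext_toy_solution. }
  assert (Hdiff : forall k, (k <= S N)%nat -> Cmod (half_diff N (b t0) (b t1) k) <= 5 * r ^ 3 * dt).
  { intros k Hk. unfold half_diff. rewrite !ext_toy_solution, Cmod_half by exact Hk.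
    pose proof (toy_solution_lipschitz t1 t0 k Hk) as H.
    rewrite Rabs_left1, Ropp_minus_distr, Hstep in H by lra. lra. }
  assert (Hcorr : Cmod (scheme_correction s N (b t0) (b t1) j) <= 5 * r * (5 * r ^ 3 * dt) ^ 2).
  { apply Cmod_scheme_correction_le; [rewrite Hmid by lia; apply Cmod_time_average_le; lia|..];
      apply Hdiff; lia. }
  pose proof (midpoint_rule_defect t0 t1 j ltac:(lra) Hj) as Hdefect.
  rewrite Hstep in Hdefect.
  replace (lte s N b dt n j) with
    ((b t1 j - b t0 j - RtoC dt * midpoint_field b t0 t1 j)
     - RtoC dt * scheme_correction s N (b t0) (b t1) j)%C.
  - assert (Hdt_mod : Cmod (RtoC dt) <= dt) by (rewrite Cmod_R, Rabs_right; lra).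
    eapply Rle_trans; [exact (Cmod_minus_le _ _ _ _ Hdefect (Cmod_mult_le _ _ _ _ Hdt_mod Hcorr))|].
    right. ring.
  - unfold lte. fold t0 t1. rewrite Fsch_toy_field. unfold midpoint_field.
    rewrite !Hmid by lia. ring.
Qed.

End ToySolution.

Theorem lemma3p5 (N : nat) (HN : (1 <= N)%nat) (s : scheme) :
  exists Cst : R -> R,
    forall b : R -> cvec, toy_solution N b ->
    forall (dt : R), 0 < dt -> forall n : nat,
      cnorm N (lte s N b dt n) <= Cst (cnorm N (b 0)) * dt ^ 3.
Proof.
  exists (fun r => sqrt (INR N) * (2000 * r ^ 7)).
  intros b Hb dt Hdt n. rewrite Rmult_assoc.
  apply cnorm_le_sqrt_dim.
  - pose proof (cnorm_nonneg N b). apply Rmult_le_pos; [|apply pow_le; lra].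
    apply Rmult_le_pos; [lra | now apply pow_le].
  - intros j Hj. now apply Cmod_lte_le.
Qed.
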